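(* Let $S\ge 2$, $m\ge 1$ and $n_1,\ldots,n_S\ge 1$ be integers, and put $n=\sum_{s=1}^S n_s$. Let $x_{sij}\in\mathbb{R}$ for $s=1,\ldots,S$, $i=1,\ldots,m$, $j=1,\ldots,n_s$. Let $\sigma_1^2,\ldots,\sigma_m^2>0$ and $\alpha_1,\ldots,\alpha_m>0$ be fixed constants. Consider the objective $$f(\mu,\gamma,d)=\sum_{i=1}^m\frac{1}{2\sigma_i^2}\Big(\sum_{j=1}^{n_1}(x_{1ij}-\mu_i-d_{1j})^2+\sum_{s=2}^S\sum_{j=1}^{n_s}(x_{sij}-\mu_i-\gamma_{si}-d_{sj})^2\Big)+\sum_{i=1}^m\alpha_i\,\mathbf{1}\Big(\sum_{s=2}^S|\gamma_{si}|>0\Big).$$ Here the variables are $\mu=(\mu_i)_{i=1}^m\in\mathbb{R}^m$, $\gamma=(\gamma_{si})_{2\le s\le S,\,1\le i\le m}$ with real entries, and $d=(d_{sj})_{1\le s\le S,\,1\le j\le n_s}$ with real entries. The objective $f$ is to be minimized subject to the constraint $d_{11}=0$. Define the following quantities: - for $s=1,\ldots,S$ and $j=1,\ldots,n_s$, $$d'_{sj}=\frac{\sum_{i=1}^m (x_{sij}-x_{si1})/\sigma_i^2}{\sum_{i=1}^m 1/\sigma_i^2};$$ - for $s=1,\ldots,S$ and $i=1,\ldots,m$, $$\mu'_{si}=\frac{1}{n_s}\sum_{j=1}^{n_s}(x_{sij}-d'_{sj}).$$ With the convention $d_1=0$, define for each $i$ the function of $(d_2,\ldots,d_S)\in\mathbb{R}^{S-1}$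 $$g_i(d_2,\ldots,d_S)=\frac{1}{2\sigma_i^2}\Big\{\sum_{s=1}^S n_s(\mu'_{si}-d_s)^2-\frac1n\Big[\sum_{s=1}^S n_s(\mu'_{si}-d_s)\Big]^2\Big\},$$ and put $$G(d_2,\ldots,d_S)=\sum_{i=1}^m\min\big(g_i(d_2,\ldots,d_S),\alpha_i\big).$$ Let $(d_2,\ldots,d_S)$ be any minimizer of $G$ over $\mathbb{R}^{S-1}$, and set $d_1=0$. Define: - $d_{sj}=d_s+d'_{sj}$ for all $s,j$; - for each $i$ with $g_i(d_2,\ldots,d_S)<\alpha_i$: $\gamma_{si}=0$ for $s=2,\ldots,S$, and $\mu_i=\frac1n\sum_{s=1}^S n_s(\mu'_{si}-d_s)$; - for each $i$ with $g_i(d_2,\ldots,d_S)\ge\alpha_i$: $\gamma_{si}=\mu'_{si}-\mu'_{1i}-d_s$ for $s=2,\ldots,S$, and $\mu_i=\mu'_{1i}$. Then the triple $(\mu,\gamma,d)$ so defined satisfies $d_{11}=0$ and is a global minimizer of $f$ among all $(\mu,\gamma,d)$ with $d_{11}=0$.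
   Context: This is the penalized (L0) negative log-likelihood for the model $x_{sij}\sim N(\mu_i+\gamma_{si}\mathbf 1(s\ge2)+d_{sj},\sigma_i^2)$ with known variances. $\mathbf{1}(\cdot)$ denotes the indicator function. *)

From Stdlib Require Import Reals Lra.
Open Scope R_scope.

(* Indices are 0-based: group s in {0..S-1} (paper's s = s+1),
   feature i in {0..m-1}, sample j in {0..ns s - 1}. *)

Fixpoint sumR (n : nat) (f : nat -> R) : R :=
  match n with
  | O => 0
  | S k => sumR k f + f k
  end.

Definition ind_pos (a : R) : R := if Rlt_dec 0 a then 1 else 0.

Section Model.
Variables (S m : nat) (ns : nat -> nat) (x : nat -> nat -> nat -> R)
          (sigma2 alpha : nat -> R).

Definition ntot : R := sumR S (fun s => INR (ns s)).

(* objective f(mu, gamma, d); gamma s i used only for s >= 1 (paper s >= 2) *)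
Definition objective (mu : nat -> R) (gamma : nat -> nat -> R)
  (d : nat -> nat -> R) : R :=
  sumR m (fun i =>
    / (2 * sigma2 i) *
    ( sumR (ns 0%nat) (fun j => (x 0%nat i j - mu i - d 0%nat j) ^ 2)
    + sumR (S - 1) (fun s' => let s := (s' + 1)%nat in
        sumR (ns s) (fun j => (x s i j - mu i - gamma s i - d s j) ^ 2))))
  + sumR m (fun i =>
      alpha i * ind_pos (sumR (S - 1) (fun s' => Rabs (gamma (s' + 1)%nat i)))).

Definition dprime (s j : nat) : R :=
  sumR m (fun i => (x s i j - x s i 0%nat) / sigma2 i) / sumR m (fun i => / sigma2 i).

Definition muprime (s i : nat) : R :=
  / INR (ns s) * sumR (ns s) (fun j => x s i j - dprime s j).

Definition dconv (D : nat -> R) (s : nat) : R :=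
  match s with O => 0 | _ => D s end.

Definition g_i (i : nat) (D : nat -> R) : R :=
  / (2 * sigma2 i) *
  ( sumR S (fun s => INR (ns s) * (muprime s i - dconv D s) ^ 2)
  - / ntot * (sumR S (fun s => INR (ns s) * (muprime s i - dconv D s))) ^ 2).

Definition G (D : nat -> R) : R :=
  sumR m (fun i => Rmin (g_i i D) (alpha i)).

Definition d_hat (D : nat -> R) (s j : nat) : R := dconv D s + dprime s j.

Definition gamma_hat (D : nat -> R) (s i : nat) : R :=
  if Rlt_dec (g_i i D) (alpha i) then 0
  else muprime s i - muprime 0%nat i - dconv D s.

Definition mu_hat (D : nat -> R) (i : nat) : R :=
  if Rlt_dec (g_i i D) (alpha i)
  then / ntot * sumR S (fun s => INR (ns s) * (muprime s i - dconv D s))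
  else muprime 0%nat i.

End Model.

From Stdlib Require Import Reals Lra Lia.
Open Scope R_scope.

(* With cell means [theta_si = mu_i + gamma_si], the residuals
   [x_sij - mu'_si - d'_sj] sum to zero over [j] and have zero
   [1/sigma_i^2]-weighted sum over [i], so they are orthogonal to every
   perturbation [(mu'_si - theta_si) - (d_sj - d'_sj)].  Hence [f] is a
   constant plus, for each [i], a quadratic excess plus the penalty.
   Replacing [d_sj - d'_sj] by its group mean only lowers the excess, which
   leaves a weighted sum of squares of [mu'_si - d_s - theta_si]; minimizing
   over [theta] with or without the penalty yields [min (g_i d) alpha_i].
   So [f >= const + G(d) >= const + G(D)], and the constructed triple
   attains [const + G(D)]. *)

Lemma sumR_ext n f g : (forall k, (k < n)%nat -> f k = g k) -> sumR n f = sumR n g.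
Proof. induction n as [|n IH]; intros H; simpl; [reflexivity|]. rewrite IH, H; auto. Qed.

Lemma sumR_add n f g : sumR n (fun k => f k + g k) = sumR n f + sumR n g.
Proof. induction n as [|n IH]; simpl; [lra|]. rewrite IH; lra. Qed.

Lemma sumR_scal n c f : sumR n (fun k => c * f k) = c * sumR n f.
Proof. induction n as [|n IH]; simpl; [lra|]. rewrite IH; lra. Qed.

Lemma sumR_const n c : sumR n (fun _ => c) = INR n * c.
Proof. induction n as [|n IH]; simpl sumR; [simpl; lra|]. rewrite IH, S_INR; lra. Qed.

Lemma sumR_le n f g : (forall k, (k < n)%nat -> f k <= g k) -> sumR n f <= sumR n g.
Proof.
  induction n as [|n IH]; intros H; simpl; [lra|].
  apply Rplus_le_compat; auto.
Qed.

Lemma sumR_comm n p f :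
  sumR n (fun i => sumR p (fun j => f i j)) = sumR p (fun j => sumR n (fun i => f i j)).
Proof.
  induction n as [|n IH]; simpl.
  - rewrite sumR_const; ring.
  - rewrite IH, <- sumR_add. reflexivity.
Qed.

Lemma sumR_split_first n f :
  (1 <= n)%nat -> sumR n f = f O + sumR (n - 1) (fun k => f (k + 1)%nat).
Proof.
  intros Hn. induction n as [|n IH]; [lia|].
  destruct n as [|n]; simpl; [lra|].
  simpl in IH. rewrite IH by lia. rewrite Nat.sub_0_r, Nat.add_1_r. lra.
Qed.

Lemma sumR_eq0 n f : (forall k, (k < n)%nat -> f k = 0) -> sumR n f = 0.
Proof. intros H. rewrite (sumR_ext n f (fun _ => 0)), sumR_const by auto. lra. Qed.

Lemma sumR_ge0 n f : (forall k, (k < n)%nat -> 0 <= f k) -> 0 <= sumR n f.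
Proof. intros H. rewrite <- (sumR_eq0 n (fun _ => 0)) by auto. now apply sumR_le. Qed.

Lemma sumR_gt0 n f :
  (1 <= n)%nat -> (forall k, (k < n)%nat -> 0 < f k) -> 0 < sumR n f.
Proof.
  intros Hn H. destruct n as [|n]; [lia|]. simpl.
  assert (0 <= sumR n f) by (apply sumR_ge0; intros; left; auto).
  assert (0 < f n) by auto. lra.
Qed.

Lemma sumR_term_le n f k :
  (forall k, (k < n)%nat -> 0 <= f k) -> (k < n)%nat -> f k <= sumR n f.
Proof.
  induction n as [|n IH]; intros H Hk; [lia|]. simpl.
  destruct (Nat.eq_dec k n) as [->|Hkn].
  - assert (0 <= sumR n f) by (apply sumR_ge0; auto). lra.
  - assert (f k <= sumR n f) by (apply IH; auto; lia). assert (0 <= f n) by auto. lra.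
Qed.

Definition wdisp n (w a : nat -> R) : R :=
  sumR n (fun k => w k * a k ^ 2) - / sumR n w * sumR n (fun k => w k * a k) ^ 2.

Lemma wsum_sq_dev n (w a : nat -> R) M : sumR n w <> 0 ->
  sumR n (fun k => w k * (a k - M) ^ 2) =
  wdisp n w a + (M * sumR n w - sumR n (fun k => w k * a k)) ^ 2 / sumR n w.
Proof.
  intros HW. unfold wdisp.
  rewrite (sumR_ext n _ (fun k => (w k * a k ^ 2 + (-2 * M) * (w k * a k)) + M ^ 2 * w k))
    by (intros; ring).
  rewrite !sumR_add, !sumR_scal. field. exact HW.
Qed.

Lemma wsum_sq_dev_wmean n (w a : nat -> R) : sumR n w <> 0 ->
  sumR n (fun k => w k * (a k - / sumR n w * sumR n (fun k => w k * a k)) ^ 2) = wdisp n w a.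
Proof.
  intros HW. rewrite wsum_sq_dev by exact HW.
  replace (/ sumR n w * sumR n (fun k => w k * a k) * sumR n w - sumR n (fun k => w k * a k))
    with 0 by (field; exact HW).
  unfold Rdiv. ring.
Qed.

Lemma wdisp_le_wsum_sq_dev n (w a : nat -> R) M : 0 < sumR n w ->
  wdisp n w a <= sumR n (fun k => w k * (a k - M) ^ 2).
Proof.
  intros HW. rewrite wsum_sq_dev by lra.
  assert (0 <= (M * sumR n w - sumR n (fun k => w k * a k)) ^ 2 / sumR n w).
  { apply Rle_mult_inv_pos; [apply pow2_ge_0 | exact HW]. }
  lra.
Qed.

Lemma sum_sq_dev_ge_mean n u (v : nat -> R) : (1 <= n)%nat ->
  INR n * (u - / INR n * sumR n v) ^ 2 <= sumR n (fun j => (u - v j) ^ 2).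
Proof.
  intros Hn.
  assert (Hpos : 0 < INR n) by (apply lt_0_INR; lia).
  assert (Hone : sumR n (fun _ => 1) = INR n) by (rewrite sumR_const; ring).
  assert (Hv : sumR n (fun k => 1 * v k) = sumR n v) by (apply sumR_ext; intros; ring).
  assert (Hdisp : 0 <= wdisp n (fun _ => 1) v).
  { rewrite <- wsum_sq_dev_wmean by lra.
    apply sumR_ge0; intros; rewrite Rmult_1_l; apply pow2_ge_0. }
  rewrite (sumR_ext n (fun j => (u - v j) ^ 2) (fun k => 1 * (v k - u) ^ 2)) by (intros; ring).
  rewrite wsum_sq_dev, Hone, Hv by lra.
  replace ((u * INR n - sumR n v) ^ 2 / INR n) with (INR n * (u - / INR n * sumR n v) ^ 2)
    by (field; lra).
  lra.
Qed.

Lemma sum_sq_orth_add m S (ns : nat -> nat) (c : nat -> R)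
    (E : nat -> nat -> nat -> R) (U V : nat -> nat -> R) :
  (forall s i, (s < S)%nat -> (i < m)%nat -> sumR (ns s) (E s i) = 0) ->
  (forall s j, (s < S)%nat -> sumR m (fun i => c i * E s i j) = 0) ->
  sumR m (fun i => c i * sumR S (fun s => sumR (ns s) (fun j =>
    (E s i j + (U s i - V s j)) ^ 2))) =
  sumR m (fun i => c i * sumR S (fun s => sumR (ns s) (fun j => E s i j ^ 2))) +
  sumR m (fun i => c i * sumR S (fun s => sumR (ns s) (fun j => (U s i - V s j) ^ 2))).
Proof.
  intros HEj HEi.
  assert (Hcross : sumR m (fun i =>
    c i * sumR S (fun s => sumR (ns s) (fun j => E s i j * (U s i - V s j)))) = 0).
  { rewrite (sumR_ext m _ (fun i =>
      sumR S (fun s => c i * U s i * sumR (ns s) (E s i)) +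
      -1 * sumR S (fun s => sumR (ns s) (fun j => V s j * (c i * E s i j))))).
    2:{ intros i Hi. rewrite <- sumR_scal, <- !sumR_scal, <- sumR_add.
        apply sumR_ext; intros s Hs.
        rewrite <- !sumR_scal, <- sumR_add. apply sumR_ext; intros; ring. }
    rewrite sumR_add, sumR_scal, (sumR_eq0 m).
    2:{ intros i Hi. apply sumR_eq0. intros s Hs. rewrite HEj by auto. ring. }
    rewrite sumR_comm, (sumR_eq0 S); [ring|].
    intros s Hs. rewrite sumR_comm. apply sumR_eq0. intros j Hj.
    rewrite sumR_scal, HEi by auto. ring. }
  assert (Hlin : forall n (f g h : nat -> R),
    sumR n (fun k => f k + g k + 2 * h k) = sumR n f + sumR n g + 2 * sumR n h).
  { intros. rewrite !sumR_add, sumR_scal. reflexivity. }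
  transitivity (sumR m (fun i =>
    c i * sumR S (fun s => sumR (ns s) (fun j => E s i j ^ 2)) +
    c i * sumR S (fun s => sumR (ns s) (fun j => (U s i - V s j) ^ 2)) +
    2 * (c i * sumR S (fun s => sumR (ns s) (fun j => E s i j * (U s i - V s j)))))).
  - apply sumR_ext; intros i Hi.
    rewrite <- !Rmult_plus_distr_l, <- Rmult_assoc, (Rmult_comm 2 (c i)), Rmult_assoc,
      <- Rmult_plus_distr_l, <- Hlin.
    f_equal. apply sumR_ext; intros s Hs. rewrite <- Hlin. apply sumR_ext; intros; ring.
  - rewrite Hlin, Hcross. ring.
Qed.

Lemma ind_pos_ge0 a : 0 <= ind_pos a.
Proof. unfold ind_pos; destruct (Rlt_dec 0 a); lra. Qed.

Lemma ind_pos_le1 a : ind_pos a <= 1.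
Proof. unfold ind_pos; destruct (Rlt_dec 0 a); lra. Qed.

Lemma ind_pos_sumR_abs n (g : nat -> R) :
  ind_pos (sumR n (fun k => Rabs (g k))) = 1 \/ (forall k, (k < n)%nat -> g k = 0).
Proof.
  unfold ind_pos. destruct (Rlt_dec 0 _) as [Hpos | Hnpos]; [now left | right].
  intros k Hk. destruct (Req_dec (g k) 0) as [Hg | Hg]; [exact Hg | exfalso].
  apply Hnpos, Rlt_le_trans with (Rabs (g k)); [now apply Rabs_pos_lt |].
  apply (sumR_term_le n (fun k => Rabs (g k))); auto using Rabs_pos.
Qed.

Lemma min_wdisp_le_penalized n (w a gam : nat -> R) M c al :
  (forall k, (k < n)%nat -> 0 <= w k) -> 0 < sumR n w -> 0 <= c -> 0 <= al ->
  Rmin (c * wdisp n w a) al <=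
  c * sumR n (fun k => w k * (a k - M - dconv gam k) ^ 2) +
  al * ind_pos (sumR (n - 1) (fun k => Rabs (gam (k + 1)%nat))).
Proof.
  intros Hw HW Hc Hal.
  assert (0 <= al * ind_pos (sumR (n - 1) (fun k => Rabs (gam (k + 1)%nat))))
    by (apply Rmult_le_pos; auto using ind_pos_ge0).
  destruct (ind_pos_sumR_abs (n - 1) (fun k => gam (k + 1)%nat)) as [Hone | Hzero].
  - rewrite Hone, Rmult_1_r.
    assert (0 <= c * sumR n (fun k => w k * (a k - M - dconv gam k) ^ 2)).
    { apply Rmult_le_pos; [exact Hc |].
      apply sumR_ge0; intros; apply Rmult_le_pos; auto using pow2_ge_0. }
    assert (Rmin (c * wdisp n w a) al <= al) by apply Rmin_r. lra.
  - rewrite (sumR_ext n _ (fun k => w k * (a k - M) ^ 2)).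
    2:{ intros [|k] Hk; simpl dconv; [ring |].
        replace (S k) with (k + 1)%nat by lia. rewrite Hzero by lia. ring. }
    assert (c * wdisp n w a <= c * sumR n (fun k => w k * (a k - M) ^ 2))
      by (apply Rmult_le_compat_l; [exact Hc | now apply wdisp_le_wsum_sq_dev]).
    assert (Rmin (c * wdisp n w a) al <= c * wdisp n w a) by apply Rmin_l. lra.
Qed.

Section Model.
Variables (S m : nat) (ns : nat -> nat) (x : nat -> nat -> nat -> R)
          (sigma2 alpha : nat -> R).
Hypothesis HS : (1 <= S)%nat.
Hypothesis Hm : (1 <= m)%nat.
Hypothesis Hns : forall s, (s < S)%nat -> (1 <= ns s)%nat.
Hypothesis Hsig : forall i, (i < m)%nat -> 0 < sigma2 i.
Hypothesis Halpha : forall i, (i < m)%nat -> 0 < alpha i.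

Local Notation d' := (dprime m x sigma2).
Local Notation mu' := (muprime m ns x sigma2).
Local Notation g_i := (g_i S m ns x sigma2).

Definition cell_mean (mu : nat -> R) (gamma : nat -> nat -> R) (s i : nat) : R :=
  mu i + dconv (fun s => gamma s i) s.

Definition resid (s i j : nat) : R := x s i j - mu' s i - d' s j.

Definition resid_fit : R :=
  sumR m (fun i => / (2 * sigma2 i) * sumR S (fun s => sumR (ns s) (fun j => resid s i j ^ 2))).

Definition excess (mu : nat -> R) (gamma d : nat -> nat -> R) (i : nat) : R :=
  / (2 * sigma2 i) * sumR S (fun s => sumR (ns s) (fun j =>
     (mu' s i - cell_mean mu gamma s i - (d s j - d' s j)) ^ 2))
  + alpha i * ind_pos (sumR (S - 1) (fun s => Rabs (gamma (s + 1)%nat i))).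

Lemma dprime_first s : d' s 0%nat = 0.
Proof.
  unfold dprime. rewrite sumR_eq0; [unfold Rdiv; ring |].
  intros i _. unfold Rdiv. ring.
Qed.

Lemma sum_inv_sigma2_pos : 0 < sumR m (fun i => / sigma2 i).
Proof. apply sumR_gt0; auto. intros i Hi. apply Rinv_0_lt_compat; auto. Qed.

Lemma resid_sum_samples s i : (s < S)%nat -> sumR (ns s) (resid s i) = 0.
Proof.
  intros Hs. assert (Hn : 0 < INR (ns s)) by (apply lt_0_INR; specialize (Hns s Hs); lia).
  unfold resid, muprime.
  rewrite (sumR_ext _ _ (fun j => (x s i j - d' s j) +
    - (/ INR (ns s) * sumR (ns s) (fun j => x s i j - d' s j)))) by (intros; ring).
  rewrite sumR_add, sumR_const. field. lra.
Qed.

Lemma wsum_x_sub_dprime s j :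
  sumR m (fun i => / sigma2 i * (x s i j - d' s j)) = sumR m (fun i => / sigma2 i * x s i 0%nat).
Proof.
  assert (HW := sum_inv_sigma2_pos). set (W := sumR m (fun i => / sigma2 i)) in *.
  assert (Hd : d' s j * W =
    sumR m (fun i => / sigma2 i * x s i j) - sumR m (fun i => / sigma2 i * x s i 0%nat)).
  { unfold dprime. fold W.
    rewrite (sumR_ext m (fun i => (x s i j - x s i 0%nat) / sigma2 i)
      (fun i => / sigma2 i * x s i j + -1 * (/ sigma2 i * x s i 0%nat)))
      by (intros; unfold Rdiv; ring).
    rewrite sumR_add, sumR_scal. field. lra. }
  rewrite (sumR_ext m _ (fun i => / sigma2 i * x s i j + - d' s j * / sigma2 i)) by (intros; ring).
  rewrite sumR_add, sumR_scal. fold W. lra.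
Qed.

Lemma resid_wsum_features s j : (s < S)%nat ->
  sumR m (fun i => / sigma2 i * resid s i j) = 0.
Proof.
  intros Hs. assert (Hn : 0 < INR (ns s)) by (apply lt_0_INR; specialize (Hns s Hs); lia).
  assert (Hmu : sumR m (fun i => / sigma2 i * mu' s i) =
                sumR m (fun i => / sigma2 i * x s i 0%nat)).
  { unfold muprime.
    rewrite (sumR_ext m _ (fun i => / INR (ns s) *
      sumR (ns s) (fun j => / sigma2 i * (x s i j - d' s j))))
      by (intros; rewrite sumR_scal; ring).
    rewrite sumR_scal, sumR_comm.
    rewrite (sumR_ext (ns s) _ (fun _ => sumR m (fun i => / sigma2 i * x s i 0%nat)))
      by (intros; apply wsum_x_sub_dprime).
    rewrite sumR_const. field. lra. }
  unfold resid.
  rewrite (sumR_ext m _ (fun i => / sigma2 i * (x s i j - d' s j) + -1 * (/ sigma2 i * mu' s i)))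
    by (intros; ring).
  rewrite sumR_add, sumR_scal, Hmu, wsum_x_sub_dprime. ring.
Qed.

Lemma objective_decomp mu gamma d :
  objective S m ns x sigma2 alpha mu gamma d = resid_fit + sumR m (excess mu gamma d).
Proof.
  unfold objective, excess. rewrite sumR_add, <- Rplus_assoc. f_equal.
  unfold resid_fit. rewrite <- sum_sq_orth_add.
  - apply sumR_ext; intros i _. f_equal.
    rewrite (sumR_split_first S) by exact HS.
    f_equal; apply sumR_ext; intros; unfold resid, cell_mean; simpl dconv.
    + ring.
    + rewrite Nat.add_1_r. simpl dconv. apply sumR_ext; intros. ring.
  - intros s i Hs _. now apply resid_sum_samples.
  - intros s j Hs. rewrite <- (Rmult_0_r (/ 2)), <- (resid_wsum_features s j Hs), <- sumR_scal.
    apply sumR_ext; intros i Hi. assert (0 < sigma2 i) by auto. field. lra.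
Qed.

Lemma ntot_pos : 0 < ntot S ns.
Proof. apply sumR_gt0; auto. intros s Hs. apply lt_0_INR. specialize (Hns s Hs). lia. Qed.

Lemma g_i_wdisp i D :
  g_i i D = / (2 * sigma2 i) * wdisp S (fun s => INR (ns s)) (fun s => mu' s i - dconv D s).
Proof. reflexivity. Qed.

Lemma excess_hat_le i D : (i < m)%nat ->
  excess (mu_hat S m ns x sigma2 alpha D) (gamma_hat S m ns x sigma2 alpha D)
    (d_hat m x sigma2 D) i <= Rmin (g_i i D) (alpha i).
Proof.
  intros Hi. assert (Hai := Halpha i Hi).
  unfold excess, cell_mean, mu_hat, gamma_hat, d_hat.
  destruct (Rlt_dec (g_i i D) (alpha i)) as [Hlt | Hge].
  - rewrite Rmin_left by lra.
    rewrite (sumR_eq0 (S - 1) (fun s => Rabs 0)) by (intros; apply Rabs_R0).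
    unfold ind_pos at 1. destruct (Rlt_dec 0 0); [lra |].
    rewrite g_i_wdisp, <- wsum_sq_dev_wmean by (pose proof ntot_pos; unfold ntot in *; lra).
    apply Req_le. rewrite Rmult_0_r, Rplus_0_r. f_equal.
    apply sumR_ext; intros s _. rewrite <- sumR_const. apply sumR_ext; intros j _.
    destruct s; simpl dconv; unfold ntot; ring.
  - rewrite Rmin_right by lra.
    rewrite (sumR_eq0 S).
    2:{ intros s _. apply sumR_eq0. intros j _. destruct s; simpl dconv; ring. }
    pose proof (ind_pos_le1 (sumR (S - 1) (fun s =>
      Rabs (mu' (s + 1)%nat i - mu' 0%nat i - dconv D (s + 1))))).
    nra.
Qed.

(* The levels [d_s] induced by an arbitrary [d]: group means of
   [d_sj - d'_sj], taken relative to the first group. *)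
Definition mean_shift (d : nat -> nat -> R) (s : nat) : R :=
  / INR (ns s) * sumR (ns s) (fun j => d s j - d' s j).

Definition rel_shift (d : nat -> nat -> R) (s : nat) : R := mean_shift d s - mean_shift d 0%nat.

Lemma min_g_i_le_excess mu gamma d i : (i < m)%nat ->
  Rmin (g_i i (rel_shift d)) (alpha i) <= excess mu gamma d i.
Proof.
  intros Hi. assert (Hsi := Hsig i Hi). assert (Hai := Halpha i Hi).
  assert (Hc : 0 < / (2 * sigma2 i)) by (apply Rinv_0_lt_compat; lra).
  assert (Hcells : sumR S (fun s => INR (ns s) *
      (mu' s i - dconv (rel_shift d) s - (mu i + mean_shift d 0%nat)
        - dconv (fun s => gamma s i) s) ^ 2)
    <= sumR S (fun s => sumR (ns s) (fun j =>
      (mu' s i - cell_mean mu gamma s i - (d s j - d' s j)) ^ 2))).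
  { apply sumR_le; intros s Hs.
    eapply Rle_trans; [| apply sum_sq_dev_ge_mean; auto].
    unfold cell_mean, rel_shift, mean_shift. destruct s; simpl dconv; right; ring. }
  rewrite g_i_wdisp. unfold excess.
  eapply Rle_trans; [| apply Rplus_le_compat_r, Rmult_le_compat_l, Hcells; lra].
  apply min_wdisp_le_penalized; [intros; apply pos_INR | exact ntot_pos | lra | lra].
Qed.

End Model.

Theorem proposition1
  (S m : nat) (ns : nat -> nat) (x : nat -> nat -> nat -> R)
  (sigma2 alpha : nat -> R)
  (HS : (2 <= S)%nat) (Hm : (1 <= m)%nat)
  (Hns : forall s, (s < S)%nat -> (1 <= ns s)%nat)
  (Hsig : forall i, (i < m)%nat -> 0 < sigma2 i)
  (Halpha : forall i, (i < m)%nat -> 0 < alpha i)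
  (D : nat -> R)
  (HDmin : forall D' : nat -> R,
      G S m ns x sigma2 alpha D <= G S m ns x sigma2 alpha D') :
  d_hat m x sigma2 D 0%nat 0%nat = 0 /\
  forall (mu : nat -> R) (gamma : nat -> nat -> R) (d : nat -> nat -> R),
    d 0%nat 0%nat = 0 ->
    objective S m ns x sigma2 alpha
      (mu_hat S m ns x sigma2 alpha D)
      (gamma_hat S m ns x sigma2 alpha D)
      (d_hat m x sigma2 D)
    <= objective S m ns x sigma2 alpha mu gamma d.
Proof.
  assert (HS1 : (1 <= S)%nat) by lia.
  split; [unfold d_hat; rewrite dprime_first; simpl; ring |].
  (* The constraint [d_11 = 0] only fixes a gauge; the bound holds for every triple. *)
  intros mu gamma d _.
  rewrite !objective_decomp by assumption.
  apply Rplus_le_compat_l, Rle_trans with (G S m ns x sigma2 alpha D).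
  - apply sumR_le; intros i Hi. now apply excess_hat_le.
  - eapply Rle_trans; [apply (HDmin (rel_shift m ns x sigma2 d)) |].
    apply sumR_le; intros i Hi. now apply min_g_i_le_excess.
Qed.
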